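(* Let $0<\delta_0<1$ and $B=\max\big(\frac5{\delta_0},\frac1{0.45}\ln\frac5{\delta_0^2}\big)$. There exists $m\in\mathbb{N}$ such that the polynomial \[h_2(x)=1-(1-x)^3\sum_{l=0}^m\frac{(-Bx)^l}{l!}\] has zero constant term and satisfies (i) $h_2'(1)=h_2''(1)=0$; (ii) for all $\Delta\in[-0.55,1/\delta_0^2]$, $|h_2(1+\Delta)-1|\le\frac{\delta_0^2|\Delta|}{5}$; (iii) for all $\Delta\in[-1,-0.55]$, $0\le h_2(1+\Delta)\le1$. *)

From Stdlib Require Import Reals Arith Factorial.
Open Scope R_scope.

Definition Bconst (d0 : R) : R := Rmax (5 / d0) (/ (45/100) * ln (5 / d0 ^ 2)).

(* h2(x) = 1 - (1-x)^3 * sum_{l=0}^m (-B x)^l / l!   (sum_f_R0 f m = f 0 + ... + f m) *)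
Definition h2 (B : R) (m : nat) (x : R) : R :=
  1 - (1 - x) ^ 3 * sum_f_R0 (fun l => (- B * x) ^ l / INR (fact l)) m.

From Stdlib Require Import Reals Factorial Lra Lia Psatz.
From Coquelicot Require Import Coquelicot.
Open Scope R_scope.

(* Proof of Lemma 4.8.  Write E_m(y) = sum_{l<=m} y^l/l! for the truncated
   exponential series, so that h2(x) = 1 - (1-x)^3 E_m(-Bx) and
   h2(1+D) - 1 = D^3 E_m(-B(1+D)).
   1. Taylor-Lagrange for t |-> exp(-t) shows that for even m and z >= 0 the
      truncation E_m(-z) is squeezed between exp(-z) and exp(-z) + r_m(z),
      where r_m(z) = z^(m+1)/(m+1)! is the Lagrange remainder bound.
   2. r_m(Z) -> 0, so for m even and large r_m is uniformly tiny on [0, Z].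
   3. Property (ii): D^2 E_m(-B(1+D)) <= D^2 exp(-B(1+D)) + D^2 r_m, where the
      first term is controlled by the choice of B (B >= 5 and
      exp(-0.45 B) <= d0^2/5) and the second by the choice of m.
   4. Property (iii): r_m(z) <= z/(1+z) and exp(-z) <= 1/(1+z) give
      0 <= E_m(-z) <= 1, and (-D)^3 lies in [0, 1].
   5. Property (i) holds for every B and m because of the factor (1-x)^3. *)

Definition exp_trunc (m : nat) (y : R) : R :=
  sum_f_R0 (fun l => y ^ l / INR (fact l)) m.

Definition exp_trunc' (m : nat) (y : R) : R :=
  match m with O => 0 | S k => exp_trunc k y end.

Lemma exp_trunc_0 (m : nat) : exp_trunc m 0 = 1.
Proof.
  induction m as [|m IH]; unfold exp_trunc in *; simpl.
  - field.
  - rewrite IH. unfold Rdiv. ring.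
Qed.

Lemma is_derive_exp_trunc (m : nat) (y : R) :
  is_derive (exp_trunc m) y (exp_trunc' m y).
Proof.
  induction m as [|m IH].
  - apply is_derive_ext with (fun _ => 1).
    + intros t. unfold exp_trunc; simpl. field.
    + auto_derive; [exact I | reflexivity].
  - apply is_derive_ext with
      (fun t => exp_trunc m t + t ^ S m / INR (fact (S m))); [reflexivity|].
    replace (exp_trunc' (S m) y)
      with (exp_trunc' m y + INR (S m) * y ^ m / INR (fact (S m))).
    + auto_derive; [eexists; exact IH|].
      change (fun x => exp_trunc m x) with (exp_trunc m).
      change (match m with O => 1 | S _ => INR m + 1 end) with (INR (S m)).
      change (fact m + m * fact m)%nat with (fact (S m)).
      rewrite (is_derive_unique _ _ _ IH). field. apply INR_fact_neq_0.
    + destruct m as [|j]; simpl exp_trunc'.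
      * unfold exp_trunc. simpl. field.
      * change (exp_trunc (S j) y)
          with (exp_trunc j y + y ^ S j / INR (fact (S j))).
        rewrite (fact_simpl (S j)), mult_INR.
        field. split; [apply INR_fact_neq_0 | apply not_0_INR; lia].
Qed.

Lemma ex_derive_exp_trunc' (m : nat) (y : R) : ex_derive (exp_trunc' m) y.
Proof.
  destruct m as [|k]; simpl.
  - apply ex_derive_const.
  - eexists. apply is_derive_exp_trunc.
Qed.

Lemma ex_derive_n_exp (k : nat) (t : R) : ex_derive_n exp k t.
Proof.
  destruct k as [|k]; simpl; [exact I|].
  apply ex_derive_ext with exp.
  - intros u. symmetry. apply is_derive_n_unique, is_derive_n_exp.
  - exists (exp t). apply is_derive_Reals, derivable_pt_lim_exp.
Qed.

Lemma Derive_n_exp_opp (k : nat) (t : R) :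
  Derive_n (fun y => exp (- y)) k t = (-1) ^ k * exp (- t).
Proof.
  rewrite Derive_n_comp_opp.
  - rewrite (is_derive_n_unique _ _ _ _ (is_derive_n_exp k (- t))). reflexivity.
  - apply filter_forall. intros. apply ex_derive_n_exp.
Qed.

Lemma ex_derive_n_exp_opp (k : nat) (t : R) :
  ex_derive_n (fun y => exp (- y)) k t.
Proof.
  destruct k as [|k]; simpl; [exact I|].
  apply ex_derive_ext with (fun u => (-1) ^ k * exp (- u)).
  - intros u. symmetry. apply Derive_n_exp_opp.
  - auto_derive. exact I.
Qed.

Definition lagrange_rem (m : nat) (z : R) : R := z ^ S m / INR (fact (S m)).

Lemma exp_opp_taylor (m : nat) (z : R) : 0 < z ->
  exists zeta, 0 < zeta < z /\
    exp (- z) = exp_trunc m (- z) + (-1) ^ S m * lagrange_rem m z * exp (- zeta).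
Proof.
  intros hz.
  destruct (Taylor_Lagrange (fun t => exp (- t)) m 0 z hz
              (fun t _ k _ => ex_derive_n_exp_opp k t)) as [zeta [Hzeta Heq]].
  exists zeta. split; [exact Hzeta|].
  rewrite Heq, Derive_n_exp_opp, Rminus_0_r. unfold exp_trunc, lagrange_rem.
  f_equal.
  - apply sum_eq. intros i _.
    rewrite Derive_n_exp_opp, Ropp_0, exp_0.
    replace (- z) with ((-1) * z) by ring. rewrite Rpow_mult_distr. field.
    apply INR_fact_neq_0.
  - field. apply INR_fact_neq_0.
Qed.

(* For even m the remainder has sign (-1)^(m+1) = -1, so the truncation
   overestimates exp(-z), by at most r_m(z). *)
Lemma exp_trunc_even_bounds (k : nat) (z : R) : 0 <= z ->
  exp (- z) <= exp_trunc (2 * k) (- z) <= exp (- z) + lagrange_rem (2 * k) z.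
Proof.
  intros hz. destruct (Req_dec z 0) as [->|hz0].
  - rewrite Ropp_0, exp_trunc_0, exp_0. unfold lagrange_rem.
    rewrite pow_ne_zero by lia. unfold Rdiv. lra.
  - destruct (exp_opp_taylor (2 * k) z ltac:(lra)) as [zeta [Hzeta Heq]].
    rewrite pow_1_odd in Heq.
    assert (0 < exp (- zeta) < 1).
    { split; [apply exp_pos|]. rewrite <- exp_0. apply exp_increasing. lra. }
    assert (0 < lagrange_rem (2 * k) z).
    { apply Rdiv_lt_0_compat; [apply pow_lt; lra | apply INR_fact_lt_0]. }
    split; nra.
Qed.

Lemma lagrange_rem_mono (m : nat) (z Z : R) :
  0 <= z <= Z -> lagrange_rem m z <= lagrange_rem m Z.
Proof.
  intros Hz. unfold lagrange_rem, Rdiv.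
  apply Rmult_le_compat_r.
  - left. apply Rinv_0_lt_compat, INR_fact_lt_0.
  - apply pow_incr. exact Hz.
Qed.

(* If r_m(Z) <= 1 then r_m(z) <= z/(1+z) whenever 1 + z <= Z, because
   z^(m+1) (1+z) <= z Z^(m+1). *)
Lemma lagrange_rem_le_ratio (m : nat) (z Z : R) :
  0 <= z -> 1 + z <= Z -> lagrange_rem m Z <= 1 -> lagrange_rem m z <= z / (1 + z).
Proof.
  intros Hz HZ Hrem. unfold lagrange_rem in *.
  set (F := INR (fact (S m))) in *.
  assert (HF : 0 < F) by apply INR_fact_lt_0.
  assert (HZF : Z * Z ^ m <= F).
  { apply (Rmult_le_reg_r (/ F)); [apply Rinv_0_lt_compat; lra|].
    rewrite Rinv_r by lra. exact Hrem. }
  assert (Hzm : z ^ m <= Z ^ m) by (apply pow_incr; lra).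
  assert (0 <= z ^ m) by (apply pow_le; lra).
  assert (Hkey : z * z ^ m * (1 + z) <= z * F).
  { assert (z ^ m * (1 + z) <= Z ^ m * Z) by (apply Rmult_le_compat; lra).
    apply Rmult_le_compat_l with (r := z) in HZF; [|exact Hz].
    nra. }
  apply (Rmult_le_reg_r (F * (1 + z))); [nra|].
  change (z ^ S m) with (z * z ^ m).
  replace (z * z ^ m / F * (F * (1 + z))) with (z * z ^ m * (1 + z)) by (field; lra).
  replace (z / (1 + z) * (F * (1 + z))) with (z * F) by (field; lra).
  exact Hkey.
Qed.

Lemma lagrange_rem_eventually_small (Z c : R) : 0 < c ->
  exists N : nat, forall n, (N <= n)%nat -> lagrange_rem n Z < c.
Proof.
  intros Hc. destruct (cv_speed_pow_fact Z c Hc) as [N HN].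
  exists N. intros n Hn.
  specialize (HN (S n) ltac:(lia)). unfold R_dist in HN.
  rewrite Rminus_0_r in HN. apply Rabs_def2 in HN. unfold lagrange_rem. lra.
Qed.

Lemma exp_le (x y : R) : x <= y -> exp x <= exp y.
Proof.
  intros H. destruct (Rle_lt_or_eq_dec _ _ H) as [Hlt | ->].
  - left. apply exp_increasing. exact Hlt.
  - right. reflexivity.
Qed.

(* exp(-z) <= 1/(1+z) for z >= 0, from 1 + z <= exp z. *)
Lemma exp_opp_mul_le (z : R) : 0 <= z -> exp (- z) * (1 + z) <= 1.
Proof.
  intros Hz.
  assert (H1 : 1 + z <= exp z) by apply exp_ineq1_le.
  assert (H2 : exp (- z) * exp z = 1).
  { rewrite <- exp_plus, Rplus_opp_l. apply exp_0. }
  assert (0 < exp (- z)) by apply exp_pos.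
  nra.
Qed.

(* For even m, E_m(-z) lies in [0, 1] once the remainder is small at 1 + z:
   E_m(-z) <= exp(-z) + r_m(z) <= 1/(1+z) + z/(1+z). *)
Lemma exp_trunc_even_unit (k : nat) (z : R) :
  0 <= z -> lagrange_rem (2 * k) (1 + z) <= 1 -> 0 <= exp_trunc (2 * k) (- z) <= 1.
Proof.
  intros Hz Hrem.
  destruct (exp_trunc_even_bounds k z Hz) as [Hlow Hup].
  assert (Hr : lagrange_rem (2 * k) z <= z / (1 + z))
    by (apply (lagrange_rem_le_ratio _ _ (1 + z)); lra).
  assert (He : exp (- z) <= 1 / (1 + z)).
  { apply (Rmult_le_reg_r (1 + z)); [lra|].
    replace (1 / (1 + z) * (1 + z)) with 1 by (field; lra).
    apply exp_opp_mul_le. exact Hz. }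
  assert (1 / (1 + z) + z / (1 + z) = 1) by (field; lra).
  assert (0 < exp (- z)) by apply exp_pos.
  lra.
Qed.

(* exp t = exp(t/2)^2 >= (1 + t/2)^2 >= t^2/4 for t >= 0. *)
Lemma exp_ge_sq_quarter (t : R) : 0 <= t -> t ^ 2 / 4 <= exp t.
Proof.
  intros Ht.
  assert (Hhalf : exp t = exp (t / 2) * exp (t / 2)).
  { rewrite <- exp_plus. f_equal. field. }
  assert (1 + t / 2 <= exp (t / 2)) by apply exp_ineq1_le.
  rewrite Hhalf. nra.
Qed.

(* With B >= 5, D^2 exp(-BD) <= 4/(B^2) <= 4/25 for D >= 0. *)
Lemma sq_exp_opp_le (B D : R) :
  5 <= B -> 0 <= D -> D ^ 2 * exp (- (B * D)) <= 4 / 25.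
Proof.
  intros HB HD.
  assert (H1 : (B * D) ^ 2 / 4 <= exp (B * D)) by (apply exp_ge_sq_quarter; nra).
  assert (H2 : exp (- (B * D)) * exp (B * D) = 1).
  { rewrite <- exp_plus, Rplus_opp_l. apply exp_0. }
  assert (0 < exp (- (B * D))) by apply exp_pos.
  assert (H3 : 25 * D ^ 2 <= (B * D) ^ 2).
  { replace ((B * D) ^ 2) with (B * B * D ^ 2) by ring.
    apply Rmult_le_compat_r; nra. }
  assert (exp (- (B * D)) * (25 * D ^ 2 / 4) <= exp (- (B * D)) * exp (B * D))
    by (apply Rmult_le_compat_l; lra).
  lra.
Qed.

(* The exponential part of estimate (ii): splitting
   exp(-B(1+D)) = exp(-0.45 B) exp(-B(0.55+D)), the second factor times D^2
   is at most 1/2 on D >= -0.55. *)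
Lemma sq_exp_shift_le (B a D : R) :
  5 <= B -> exp (- (45 / 100 * B)) <= a -> - (55 / 100) <= D ->
  D ^ 2 * exp (- (B * (1 + D))) <= a / 2.
Proof.
  intros HB Ha HD.
  assert (Hsplit : exp (- (B * (1 + D)))
                   = exp (- (45 / 100 * B)) * exp (- (B * (55 / 100 + D)))).
  { rewrite <- exp_plus. apply f_equal. field. }
  assert (0 < exp (- (45 / 100 * B))) by apply exp_pos.
  assert (0 < exp (- (B * (55 / 100 + D)))) by apply exp_pos.
  assert (Hrest : D ^ 2 * exp (- (B * (55 / 100 + D))) <= 1 / 2).
  { destruct (Rle_or_lt D 0) as [HDn|HDp].
    - assert (exp (- (B * (55 / 100 + D))) <= 1).
      { rewrite <- exp_0. apply exp_le. nra. }
      nra.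
    - assert (exp (- (B * (55 / 100 + D))) <= exp (- (B * D))) by (apply exp_le; nra).
      assert (D ^ 2 * exp (- (B * D)) <= 4 / 25) by (apply sq_exp_opp_le; lra).
      nra. }
  rewrite Hsplit. nra.
Qed.

Lemma Bconst_gt_5 (d0 : R) : 0 < d0 < 1 -> 5 < Bconst d0.
Proof.
  intros Hd. apply Rlt_le_trans with (5 / d0); [|apply Rmax_l].
  apply (Rmult_lt_reg_r d0); [lra|].
  replace (5 / d0 * d0) with 5 by (field; lra). lra.
Qed.

Lemma exp_opp_Bconst (d0 : R) : 0 < d0 ->
  exp (- (45 / 100 * Bconst d0)) <= d0 ^ 2 / 5.
Proof.
  intros Hd. assert (Hd2 : 0 < d0 ^ 2) by (apply pow_lt; lra).
  assert (Hln : ln (5 / d0 ^ 2) <= 45 / 100 * Bconst d0).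
  { assert (H := Rmax_r (5 / d0) (/ (45 / 100) * ln (5 / d0 ^ 2))).
    fold (Bconst d0) in H. lra. }
  apply exp_le in Hln. rewrite exp_ln in Hln by (apply Rdiv_lt_0_compat; lra).
  rewrite exp_Ropp.
  replace (d0 ^ 2 / 5) with (/ (5 / d0 ^ 2)) by (field; lra).
  apply Rinv_le_contravar; [apply Rdiv_lt_0_compat; lra | exact Hln].
Qed.

Lemma h2_exp_trunc (B : R) (m : nat) (x : R) :
  h2 B m x = 1 - (1 - x) ^ 3 * exp_trunc m (- B * x).
Proof. reflexivity. Qed.

Lemma h2_at_0 (B : R) (m : nat) : h2 B m 0 = 0.
Proof. rewrite h2_exp_trunc, Rmult_0_r, exp_trunc_0. ring. Qed.

Lemma h2_shift (B : R) (m : nat) (D : R) :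
  h2 B m (1 + D) - 1 = D ^ 3 * exp_trunc m (- (B * (1 + D))).
Proof.
  rewrite h2_exp_trunc. replace (- B * (1 + D)) with (- (B * (1 + D))) by ring. ring.
Qed.

(* Property (i), for all B and m: h2' and h2'' vanish at 1, since every term
   of h2' = 3(1-x)^2 E_m(-Bx) + B (1-x)^3 E_m'(-Bx) carries (1-x)^2. *)
Lemma h2_flat_at_1 (B : R) (m : nat) :
  exists d1 : R -> R,
    (forall x, derivable_pt_lim (h2 B m) x (d1 x)) /\
    d1 1 = 0 /\ derivable_pt_lim d1 1 0.
Proof.
  exists (fun x => 3 * (1 - x) ^ 2 * exp_trunc m (- B * x)
                 - (1 - x) ^ 3 * (- B * exp_trunc' m (- B * x))).
  split; [|split].
  - intros x. apply is_derive_Reals.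
    apply is_derive_ext with (fun x => 1 - (1 - x) ^ 3 * exp_trunc m (- B * x));
      [intros t; symmetry; apply h2_exp_trunc|].
    auto_derive; [eexists; apply is_derive_exp_trunc|].
    change (fun t => exp_trunc m t) with (exp_trunc m).
    rewrite (is_derive_unique _ _ _ (is_derive_exp_trunc m (- B * x))). ring.
  - ring.
  - apply is_derive_Reals. auto_derive.
    + repeat split; [eexists; apply is_derive_exp_trunc | apply ex_derive_exp_trunc'].
    + ring.
Qed.

(* Property (ii), provided r_m is at most d0^6/10 at B (1 + 1/d0^2), the
   largest value of z = B(1+D) that occurs. *)
Lemma h2_estimate_mid (d0 : R) (k : nat) :
  0 < d0 < 1 ->
  lagrange_rem (2 * k) (Bconst d0 * (1 + 1 / d0 ^ 2)) <= d0 ^ 6 / 10 ->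
  forall D, - (55 / 100) <= D <= 1 / d0 ^ 2 ->
    Rabs (h2 (Bconst d0) (2 * k) (1 + D) - 1) <= d0 ^ 2 * Rabs D / 5.
Proof.
  intros Hd Hrem D HD.
  set (B := Bconst d0) in *.
  assert (HB : 5 < B) by apply Bconst_gt_5, Hd.
  assert (Hd2 : 0 < d0 ^ 2) by (apply pow_lt; lra).
  assert (Hinv : 1 <= 1 / d0 ^ 2).
  { assert (d0 ^ 2 <= 1) by (rewrite <- (pow1 2); apply pow_incr; lra).
    apply (Rmult_le_reg_r (d0 ^ 2)); [lra|].
    replace (1 / d0 ^ 2 * d0 ^ 2) with 1 by (field; lra). lra. }
  set (z := B * (1 + D)).
  assert (Hz : 0 <= z <= B * (1 + 1 / d0 ^ 2)).
  { unfold z. split; [nra | apply Rmult_le_compat_l; lra]. }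
  destruct (exp_trunc_even_bounds k z (proj1 Hz)) as [Hlow Hup].
  set (e := exp_trunc (2 * k) (- z)) in *.
  assert (He : 0 <= e) by (pose proof (exp_pos (- z)); lra).
  assert (Hr : lagrange_rem (2 * k) z <= d0 ^ 6 / 10).
  { eapply Rle_trans; [apply lagrange_rem_mono, Hz | exact Hrem]. }
  assert (Hr0 : 0 <= lagrange_rem (2 * k) z).
  { apply Rdiv_le_0_compat; [apply pow_le; lra | apply INR_fact_lt_0]. }
  assert (HD2 : D ^ 2 <= (1 / d0 ^ 2) ^ 2) by nra.
  assert (Hexp : D ^ 2 * exp (- z) <= d0 ^ 2 / 10).
  { replace (d0 ^ 2 / 10) with (d0 ^ 2 / 5 / 2) by field.
    apply sq_exp_shift_le; [lra | apply exp_opp_Bconst; lra | lra]. }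
  assert (Hrem_sq : D ^ 2 * lagrange_rem (2 * k) z <= d0 ^ 2 / 10).
  { replace (d0 ^ 2 / 10) with ((1 / d0 ^ 2) ^ 2 * (d0 ^ 6 / 10)) by (field; lra).
    apply Rmult_le_compat; [nra | lra | exact HD2 | exact Hr]. }
  assert (Hsq : D ^ 2 * e <= d0 ^ 2 / 5) by nra.
  rewrite h2_shift. fold z e.
  rewrite Rabs_mult, (Rabs_pos_eq e He), <- RPow_abs.
  replace (Rabs D ^ 3) with (Rabs D * Rabs D ^ 2) by ring.
  rewrite pow2_abs.
  pose proof (Rabs_pos D). nra.
Qed.

(* Property (iii), provided r_m(1+B) <= 1; here z = B(1+D) lies in [0, B]. *)
Lemma h2_estimate_low (B : R) (k : nat) :
  0 <= B -> lagrange_rem (2 * k) (1 + B) <= 1 ->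
  forall D, -1 <= D <= - (55 / 100) -> 0 <= h2 B (2 * k) (1 + D) <= 1.
Proof.
  intros HB Hrem D HD.
  set (z := B * (1 + D)).
  assert (Hz : 0 <= z <= B) by (unfold z; split; nra).
  assert (He : 0 <= exp_trunc (2 * k) (- z) <= 1).
  { apply exp_trunc_even_unit; [lra|].
    apply Rle_trans with (lagrange_rem (2 * k) (1 + B)); [|exact Hrem].
    apply lagrange_rem_mono. lra. }
  assert (Hcube : 0 <= (- D) ^ 3 <= 1).
  { split; [apply pow_le; lra | rewrite <- (pow1 3); apply pow_incr; lra]. }
  pose proof (h2_shift B (2 * k) D) as Hh. fold z in Hh.
  replace (D ^ 3) with (- (- D) ^ 3) in Hh by ring. nra.
Qed.

(* Main theorem: take m even with r_m(1 + B(1+1/d0^2)) < d0^6/10. *)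
Theorem lemma4p8 (d0 : R) (hd0 : 0 < d0) (hd1 : d0 < 1) :
  exists m : nat,
    (* zero constant term of the polynomial h2 *)
    h2 (Bconst d0) m 0 = 0 /\
    (* (i) h2'(1) = h2''(1) = 0 : d1 is the derivative of h2 everywhere *)
    (exists d1 : R -> R,
        (forall x, derivable_pt_lim (h2 (Bconst d0) m) x (d1 x)) /\
        d1 1 = 0 /\ derivable_pt_lim d1 1 0) /\
    (* (ii) *)
    (forall D : R, - (55/100) <= D <= 1 / d0 ^ 2 ->
        Rabs (h2 (Bconst d0) m (1 + D) - 1) <= d0 ^ 2 * Rabs D / 5) /\
    (* (iii) *)
    (forall D : R, -1 <= D <= - (55/100) ->
        0 <= h2 (Bconst d0) m (1 + D) <= 1).
Proof.
  set (B := Bconst d0).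
  set (Y := B * (1 + 1 / d0 ^ 2)).
  assert (HB : 5 < B) by (apply Bconst_gt_5; lra).
  assert (HY : B <= Y).
  { assert (0 < 1 / d0 ^ 2) by (apply Rdiv_lt_0_compat; [lra | apply pow_lt; lra]).
    unfold Y. nra. }
  assert (Hc : 0 < d0 ^ 6 / 10) by (pose proof (pow_lt d0 6 hd0); lra).
  assert (Hc1 : d0 ^ 6 / 10 <= 1).
  { assert (d0 ^ 6 <= 1) by (rewrite <- (pow1 6); apply pow_incr; lra). lra. }
  destruct (lagrange_rem_eventually_small (1 + Y) (d0 ^ 6 / 10) Hc) as [N HN].
  assert (Hrem : lagrange_rem (2 * N) (1 + Y) < d0 ^ 6 / 10) by (apply HN; lia).
  exists (2 * N)%nat.
  split; [|split; [|split]].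
  - apply h2_at_0.
  - apply h2_flat_at_1.
  - apply h2_estimate_mid; [lra|]. fold B Y.
    apply Rle_trans with (lagrange_rem (2 * N) (1 + Y)); [apply lagrange_rem_mono|]; lra.
  - apply h2_estimate_low; [lra|].
    apply Rle_trans with (lagrange_rem (2 * N) (1 + Y)); [apply lagrange_rem_mono|]; lra.
Qed.
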